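(* There exist a stochastic two-armed bandit environment and two base algorithms $\mathcal{B}_1,\mathcal{B}_2$ for it, where $\mathcal{B}_1$ always plays an optimal arm (so $\mathcal{B}_1$ has zero regret), such that the following holds: when the two base algorithms are handed to the master in a uniformly random order, every master algorithm has regret $R(T)=\Omega\!\left(\frac{\sqrt{T}}{\log T}\right)$, i.e. there are constants $c>0$ and $T_0$, independent of the master, with $R(T)\ge c\,\frac{\sqrt T}{\log T}$ for all $T\ge T_0$.
   Context: Model selection (algorithm selection) problem: there is a stochastic $K$-armed bandit environment in which arm $a$ has a fixed reward distribution with mean $\mu_a$; let $\mu^*=\max_a\mu_a$. There are $M$ base algorithms (arbitrary, possibly randomized, bandit algorithms with internal state). A master algorithm interacts for $T$ rounds: in round $t$ it selects an index $j_t\in\{1,\dots,M\}$ based on its past observations; base $j_t$ chooses an arm $a_t$ according to its current state, the arm is played, the reward is observed by the master and passed to base $j_t$, which updates its state; bases not selected do not update. The regret of the master is $R(T)=T\mu^*-\mathbb{E}\big[\sum_{t=1}^T\mu_{a_t}\big]$, the expectation being over all randomness (including the random order of the bases). *)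

From HB Require Import structures.
From mathcomp Require Import all_boot all_order all_algebra.
From mathcomp Require Import all_classical all_reals all_analysis.
Set Implicit Arguments. Unset Strict Implicit. Unset Printing Implicit Defensive.
Import Order.TTheory GRing.Theory Num.Theory.
Local Open Scope ring_scope.

Section ModelSelection.
Variable R : realType.

Definition arm := 'I_2.

(* A stochastic environment: each arm has a finitely supported reward
   distribution, given as a list of (reward value, probability) pairs. *)
Definition env := arm -> seq (R * R).

Definition env_valid (D : env) : Prop :=
  forall a : arm, (forall x, x \in D a -> 0 <= x.2) /\ \sum_(x <- D a) x.2 = 1.

Definition mean (D : env) (a : arm) : R := \sum_(x <- D a) x.1 * x.2.

Definition opt (D : env) : R := Num.max (mean D ord0) (mean D ord_max).

(* A (randomized) base algorithm: given its own past observations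
   (arms it played and rewards it received; it only updates when selected),
   a probability distribution over arms. *)
Definition base := seq (arm * R) -> arm -> R.

Definition base_valid (B : base) : Prop :=
  forall h, (forall a, 0 <= B h a) /\ \sum_(a < 2) B h a = 1.

(* A (randomized) master algorithm over M = 2 bases: given its past
   observations (selected indices and observed rewards), a probability
   distribution over base indices. *)
Definition master := seq ('I_2 * R) -> 'I_2 -> R.

Definition master_valid (M : master) : Prop :=
  forall h, (forall j, 0 <= M h j) /\ \sum_(j < 2) M h j = 1.

Definition upd (hb : 'I_2 -> seq (arm * R)) (j : 'I_2) (o : arm * R) :=
  fun i : 'I_2 => if i == j then rcons (hb i) o else hb i.

(* Expected sum of mu_{a_t} over the remaining n rounds, given the master's
   history hm and the bases' histories hb; Bs j is the base that the master
   sees under index j. *)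
Fixpoint value (D : env) (M : master) (Bs : 'I_2 -> base) (n : nat)
    (hm : seq ('I_2 * R)) (hb : 'I_2 -> seq (arm * R)) : R :=
  match n with
  | 0 => 0
  | n'.+1 =>
    \sum_(j < 2) M hm j *
      \sum_(a < 2) Bs j (hb j) a *
        (mean D a + \sum_(x <- D a)
                      x.2 * value D M Bs n' (rcons hm (j, x.1)) (upd hb j (a, x.1)))
  end.

(* The bases handed to the master in order: if swap = false, index 0 is B1. *)
Definition ordered (B1 B2 : base) (swap : bool) (j : 'I_2) : base :=
  if (j == ord0) != swap then B1 else B2.

(* E[sum_{t<=T} mu_{a_t}], averaging over the uniformly random order. *)
Definition exp_reward (D : env) (M : master) (B1 B2 : base) (T : nat) : R :=
  2^-1 * (value D M (ordered B1 B2 false) T [::] (fun _ => [::])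
        + value D M (ordered B1 B2 true) T [::] (fun _ => [::])).

Definition regret (D : env) (M : master) (B1 B2 : base) (T : nat) : R :=
  T%:R * opt D - exp_reward D M B1 B2 T.

End ModelSelection.

From HB Require Import structures.
From mathcomp Require Import all_boot all_order all_algebra.
From mathcomp Require Import all_classical all_reals all_analysis.
From mathcomp Require Import ring lra zify.
Set Implicit Arguments.
Unset Strict Implicit.
Unset Printing Implicit Defensive.
Import Order.TTheory GRing.Theory Num.Theory.
Local Open Scope ring_scope.

(* Arm 0 pays a fair coin and arm 1 pays 0.  B1 always pulls arm 0; at its n-th
   selection B2 pulls arm 1 with probability p(n) = 1/(4 sqrt(n+3) ln(n+3)),
   which costs p(n)/2, so B2 is a slightly biased coin that the master can tell
   apart from B1 only slowly.  Weight the two orderings of the bases by w0, w1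
   (their likelihoods given the observed rewards).  One observation of B2's
   coin lowers the parallel sum w0 w1 / (w0 + w1) by at most (w0 + w1) p^2 / 8
   in expectation, and p(n)^2 <= 8 (S(n) - S(n+1)) for S(n) = 1/(128 ln(n+2)),
   so the potential w0 w1 / (w0 + w1) - (w0 + w1) (S(n0) + S(n1)) does not
   decrease in expectation.  Whichever index the master selects, it is B2 under
   an ordering whose weight is at least the potential, so every round costs at
   least p(n0 + n1)/2 times the potential, which starts above 1/8.  Hence the
   regret is at least sum_(t < T) p(t)/16 >= T p(T)/16 = Omega(sqrt T / ln T). *)

Lemma sum_ord2 (V : nmodType) (F : 'I_2 -> V) : \sum_(j < 2) F j = F ord0 + F ord_max.
Proof. by rewrite !big_ord_recl big_ord0 addr0; congr (_ + F _); apply: val_inj. Qed.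

Lemma ler_wconvex2 (R : numDomainType) (m0 m1 x y z : R) :
  0 <= m0 -> 0 <= m1 -> m0 + m1 = 1 -> z <= x -> z <= y -> z <= m0 * x + m1 * y.
Proof.
move=> m0_ge0 m1_ge0 m_sum zx zy.
by rewrite -[z]mul1r -m_sum mulrDl lerD // ler_wpM2l.
Qed.

Section Numerics.
Variable R : realType.

Lemma inv_le_ln_sub1 (x : R) : 1 < x -> x^-1 <= ln x - ln (x - 1).
Proof.
move=> x1; have x0 : 0 < x by lra.
have ix : 0 < x^-1 < 1 by rewrite invr_gt0 x0 /= invf_lt1.
have -> : x - 1 = x * (1 - x^-1) by rewrite mulrBr mulr1 divff ?gt_eqF.
rewrite lnM ?posrE //; last lra.
have := @le_ln1Dx R (- x^-1) ltac:(lra); lra.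
Qed.

Lemma half_le_ln2 : 2^-1 <= ln (2 : R).
Proof. by have := @inv_le_ln_sub1 2 ltac:(lra); rewrite (_ : 2 - 1 = 1) ?ln1; lra. Qed.

Lemma ln_nat_gt0 (n : nat) : (1 < n)%N -> 0 < ln (n%:R : R).
Proof. by move=> n1; apply: ln_gt0; rewrite ltr1n. Qed.

Lemma ln_nat_le (m n : nat) : (0 < m <= n)%N -> ln (m%:R : R) <= ln n%:R.
Proof. by move=> /andP[m0 mn]; rewrite ler_ln ?posrE ?ltr0n ?ler_nat //; lia. Qed.

Definition rate (n : nat) : R := 4^-1 / (Num.sqrt (n + 3)%:R * ln (n + 3)%:R).

Definition budget (n : nat) : R := 128^-1 / ln (n + 2)%:R.

Lemma rate_denom_gt0 n : 0 < Num.sqrt (n + 3)%:R * ln (n + 3)%:R :> R.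
Proof. by rewrite mulr_gt0 ?ln_nat_gt0 ?sqrtr_gt0 ?ltr0n //; lia. Qed.

Lemma rate_gt0 n : 0 < rate n.
Proof. by rewrite divr_gt0 ?rate_denom_gt0. Qed.

Lemma rate_le_half n : rate n <= 2^-1.
Proof.
have s1 : 1 <= Num.sqrt (n + 3)%:R :> R.
  by rewrite -[leLHS]sqrtr1 ler_wsqrtr // ler1n; lia.
have l2 : 2^-1 <= ln (n + 3)%:R :> R.
  by apply: le_trans half_le_ln2 (@ln_nat_le 2 (n + 3) _); lia.
rewrite /rate ler_pdivrMr ?rate_denom_gt0 //; nra.
Qed.

Lemma le_rate m n : (m <= n)%N -> rate n <= rate m.
Proof.
move=> mn; rewrite /rate ler_pM2l ?invr_gt0 // lef_pV2 ?posrE ?rate_denom_gt0 //.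
apply: ler_pM; rewrite ?sqrtr_ge0 ?ln_ge0 ?ler_wsqrtr ?ln_nat_le ?ler_nat ?ler1n //; lia.
Qed.

Lemma budget_ge0 n : 0 <= budget n.
Proof. by rewrite divr_ge0 // ltW // ln_nat_gt0 //; lia. Qed.

Lemma budget0_le : budget 0 <= 64^-1.
Proof.
have := half_le_ln2.
by rewrite /budget add0n ler_pdivrMr ?ln_nat_gt0 //; lra.
Qed.

(* [1/ln] decreases by at least [1/(x ln^2 x)] between [x - 1] and [x]. *)
Lemma sqr_rate_le n : rate n ^+ 2 <= 8 * (budget n - budget n.+1).
Proof.
rewrite /rate /budget addSnnS.
have a0 : 0 < ln (n + 2)%:R :> R by apply: ln_nat_gt0; lia.
set x : R := (n + 3)%:R.
have x1 : 1 < x by rewrite /x ltr1n; lia.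
rewrite (_ : (n + 2)%:R = x - 1) in a0 *; last by rewrite /x !natrD; lra.
have dln := inv_le_ln_sub1 x1.
set a := ln (x - 1) in a0 dln *; set b := ln x in dln *.
have x0 : 0 < x^-1 by rewrite invr_gt0; lra.
have ab : a <= b by lra.
have b0 : 0 < b by lra.
have key : (x * b ^+ 2)^-1 <= a^-1 - b^-1.
  have -> : a^-1 - b^-1 = (b - a) / (a * b) by field; rewrite !gt_eqF.
  apply: (@le_trans _ _ (x^-1 / (a * b))).
    rewrite invfM ler_pM2l // lef_pV2 ?posrE ?mulr_gt0 ?exprn_gt0 //.
    by rewrite expr2 ler_pM2r.
  by rewrite ler_wpM2r // invr_ge0 ltW // mulr_gt0.
have -> : (4^-1 / (Num.sqrt x * b)) ^+ 2 = 16^-1 * (x * b ^+ 2)^-1.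
  rewrite expr_div_n exprMn sqr_sqrtr; last lra.
  by field; rewrite !gt_eqF //; lra.
lra.
Qed.

Lemma rate_ge T : (3 <= T)%N -> (16 * (Num.sqrt T%:R * ln T%:R))^-1 <= rate T.
Proof.
move=> T3; rewrite /rate natrD; set x : R := T%:R.
have x3 : 3 <= x by rewrite (ler_nat R 3 T).
have sqrt_le : Num.sqrt (x + 3) <= 2 * Num.sqrt x.
  have -> : 2 * Num.sqrt x = Num.sqrt (2 ^+ 2 * x).
    by rewrite sqrtrM ?sqrtr_sqr ?ger0_norm ?sqr_ge0.
  by rewrite ler_wsqrtr //; lra.
have ln_le : ln (x + 3) <= 2 * ln x.
  have -> : 2 * ln x = ln (x ^+ 2) by rewrite lnXn ?mulr2n; lra.
  rewrite ler_ln ?posrE; nra.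
have denom_le : Num.sqrt (x + 3) * ln (x + 3) <= 4 * (Num.sqrt x * ln x).
  have ln_ge0' : 0 <= ln (x + 3) by rewrite ln_ge0 //; lra.
  by have := ler_pM (sqrtr_ge0 _) ln_ge0' sqrt_le ln_le; rewrite mulrACA; lra.
by rewrite -invfM lef_pV2 ?posrE ?mulr_gt0 ?sqrtr_gt0 ?ln_gt0 //; lra.
Qed.

Lemma sqrt_div_ln_le_rate T : (3 <= T)%N ->
  256^-1 * Num.sqrt T%:R / ln T%:R <= T%:R * rate T / 16.
Proof.
move=> T3; have := rate_ge T3; set x : R := T%:R => rate_T.
have x3 : 3 <= x by rewrite (ler_nat R 3 T).
have sqrt_gt0 : 0 < Num.sqrt x by rewrite sqrtr_gt0; lra.
have ln_gt0 : 0 < ln x by rewrite ln_gt0 //; lra.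
have -> : 256^-1 * Num.sqrt x / ln x = x * (16 * (Num.sqrt x * ln x))^-1 / 16.
  have x_sqr : x = Num.sqrt x ^+ 2 by rewrite sqr_sqrtr //; lra.
  set s := Num.sqrt x in sqrt_gt0 x_sqr *; set l := ln x in ln_gt0 *.
  by rewrite [in RHS]x_sqr; field; rewrite !gt_eqF.
by rewrite ler_pM2r // ler_pM2l //; lra.
Qed.

End Numerics.

Section ParallelSum.
Variable R : realFieldType.

Definition parallel_sum (u v : R) : R := u * v / (u + v).

Lemma parallel_sumC u v : parallel_sum u v = parallel_sum v u.
Proof. by rewrite /parallel_sum [u * v]mulrC [u + v]addrC. Qed.

Lemma parallel_sum_le_r u v : 0 <= u -> 0 <= v -> parallel_sum u v <= v.
Proof.
rewrite /parallel_sum => u0 v0.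
have [->|s0] := eqVneq (u + v) 0; first by rewrite invr0 mulr0.
rewrite ler_pdivrMr; last by rewrite lt_def s0 addr_ge0.
by rewrite [u * v]mulrC ler_wpM2l //; lra.
Qed.

Lemma parallel_sum_split_defect u v p : 0 < u + v -> 0 <= v * p <= (u + v) / 2 ->
  parallel_sum u v -
    (parallel_sum (u / 2) (v * (1 - p) / 2) + parallel_sum (u / 2) (v * (1 + p) / 2)) =
  (u * v) ^+ 2 * p ^+ 2 / ((u + v) * ((u + v) ^+ 2 - (v * p) ^+ 2)).
Proof.
move=> s0 /andP[vp0 vp1].
have d0 : u + v * (1 - p) != 0 by rewrite gt_eqF // mulrBr mulr1; lra.
have d1 : u + v * (1 + p) != 0 by rewrite gt_eqF // mulrDr mulr1; lra.
have d2 : (u + v) ^+ 2 - (v * p) ^+ 2 != 0.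
  by rewrite gt_eqF // subr_gt0 ltr_pXn2r ?nnegrE ?(ltW s0) //; lra.
rewrite /parallel_sum; field.
by rewrite d0 d1 d2 gt_eqF.
Qed.

Lemma parallel_sum_split u v p : 0 <= u -> 0 <= v -> 0 <= p <= 2^-1 ->
  parallel_sum u v - (u + v) * p ^+ 2 / 8 <=
  parallel_sum (u / 2) (v * (1 - p) / 2) + parallel_sum (u / 2) (v * (1 + p) / 2).
Proof.
move=> u0 v0 /andP[p0 p2].
have [s0|s0] := eqVneq (u + v) 0.
  have [-> ->] : u = 0 /\ v = 0 by lra.
  by rewrite /parallel_sum !(mul0r, mulr0, addr0, invr0, subrr).
have sp : 0 < u + v by rewrite lt_def s0 addr_ge0.
have vp0 : 0 <= v * p by rewrite mulr_ge0.
have vps : v * p <= (u + v) / 2 by have := ler_wpM2l v0 p2; lra.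
rewrite lerBlDr -lerBlDl parallel_sum_split_defect ?vp0 //.
set s := u + v in sp vps *.
have amgm : 4 * (u * v) <= s ^+ 2.
  by rewrite -subr_ge0 (_ : _ - _ = (u - v) ^+ 2) ?sqr_ge0 // /s; ring.
have uv : (u * v) ^+ 2 <= s ^+ 4 / 16.
  have : (4 * (u * v)) ^+ 2 <= (s ^+ 2) ^+ 2.
    by rewrite ler_pXn2r ?nnegrE ?mulr_ge0 ?sqr_ge0 // ltW.
  by rewrite exprMn -exprM; lra.
have Dp : 3 / 4 * s ^+ 2 <= s ^+ 2 - (v * p) ^+ 2.
  have : (v * p) ^+ 2 <= (s / 2) ^+ 2.
    by rewrite ler_pXn2r ?nnegrE // divr_ge0 // ltW.
  rewrite expr_div_n; lra.
have s2 : 0 < s ^+ 2 by rewrite exprn_gt0.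
rewrite ler_pdivrMr; last by rewrite mulr_gt0 //; lra.
have p2ge := sqr_ge0 p.
apply: le_trans (ler_wpM2r p2ge uv) _.
apply: le_trans (ler_wpM2l _ (ler_wpM2l (ltW sp) Dp)); last first.
  by rewrite mulr_ge0 ?mulr_ge0 // ltW.
have : 0 <= s ^+ 4 * p ^+ 2 by rewrite mulr_ge0 // exprn_ge0 // ltW.
lra.
Qed.

End ParallelSum.

Section Potential.
Variable R : realType.

Definition potential (u v : R) (m n : nat) : R :=
  parallel_sum u v - (u + v) * (budget R m + budget R n).

Lemma potentialC u v m n : potential u v m n = potential v u n m.
Proof. by rewrite /potential parallel_sumC [u + v]addrC [budget R m + _]addrC. Qed.

Lemma potential_le_r u v m n : 0 <= u -> 0 <= v -> potential u v m n <= v.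
Proof.
move=> u0 v0; have := parallel_sum_le_r u0 v0.
have : 0 <= (u + v) * (budget R m + budget R n).
  by rewrite mulr_ge0 ?addr_ge0 ?budget_ge0.
rewrite /potential; lra.
Qed.

Lemma potential_split u v m n : 0 <= u -> 0 <= v ->
  potential u v m n <=
  potential (u / 2) (v * (1 - rate R m) / 2) m.+1 n +
  potential (u / 2) (v * (1 + rate R m) / 2) m.+1 n.
Proof.
move=> u0 v0; set p := rate R m.
have p0 : 0 <= p <= 2^-1 by rewrite ltW ?rate_gt0 ?rate_le_half.
have := parallel_sum_split u0 v0 p0.
have := ler_wpM2l (addr_ge0 u0 v0) (sqr_rate_le R m); rewrite -/p.
rewrite /potential; lra.
Qed.

Definition cost (n s : nat) : R := 2^-1 * \sum_(k < n) rate R (s + k).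

Lemma costS n s : cost n.+1 s = 2^-1 * rate R s + cost n s.+1.
Proof.
rewrite /cost big_ord_recl addn0 mulrDr.
by under eq_bigr do rewrite lift0 /= addnS -addSn.
Qed.

Lemma cost_ge0 n s : 0 <= cost n s.
Proof. by rewrite mulr_ge0 // sumr_ge0 // => k _; rewrite ltW ?rate_gt0. Qed.

Lemma cost_ge n : n%:R * rate R n / 2 <= cost n 0.
Proof.
rewrite /cost mulrC ler_pM2l // mulr_natl -[in leLHS](card_ord n) -sumr_const.
by apply: ler_sum => k _; rewrite card_ord add0n le_rate // ltnW.
Qed.

Lemma potential_init : 8^-1 <= potential (2^-1) (2^-1) 0 0.
Proof.
have := budget0_le R.
rewrite /potential /parallel_sum (_ : 2^-1 + 2^-1 = 1 :> R); last lra.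
by rewrite invr1 mulr1 mul1r; lra.
Qed.

(* One round in which the selected index is B1 under the ordering of weight [u]
   and B2 under that of weight [v]; [a_r], [b_r] are the remaining regrets of
   these orderings after reward [r]. *)
Lemma potential_branch u v m n K a1 a0 b1 b0 :
  0 <= u -> 0 <= v -> 0 <= K ->
  K * potential (u / 2) (v * (1 - rate R m) / 2) m.+1 n <=
    u / 2 * a1 + v * (1 - rate R m) / 2 * b1 ->
  K * potential (u / 2) (v * (1 + rate R m) / 2) m.+1 n <=
    u / 2 * a0 + v * (1 + rate R m) / 2 * b0 ->
  (2^-1 * rate R (m + n) + K) * potential u v m n <=
  u * (2^-1 * a1 + 2^-1 * a0) +
  v * (rate R m / 2 + (1 - rate R m) / 2 * b1 + (1 + rate R m) / 2 * b0).
Proof.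
move=> u0 v0 K0 h1 h0.
have explore : rate R (m + n) * potential u v m n <= v * rate R m.
  apply: le_trans (ler_wpM2l (ltW (rate_gt0 R _)) (potential_le_r m n u0 v0)) _.
  by rewrite mulrC ler_wpM2l // le_rate // leq_addr.
have := ler_wpM2l K0 (potential_split m n u0 v0).
lra.
Qed.

End Potential.

Lemma eq_value_size (R : realType) (D : env R) (M : master R) (Bs : 'I_2 -> base R) :
  (forall j h h', size h = size h' -> Bs j h = Bs j h') ->
  forall n hm hb hb', (forall i, size (hb i) = size (hb' i)) ->
  value D M Bs n hm hb = value D M Bs n hm hb'.
Proof.
move=> Bs_size; elim=> [//|n IHn] hm hb hb' hb_size /=.
apply: eq_bigr => j _; rewrite (Bs_size j _ _ (hb_size j)).
congr (_ * _); apply: eq_bigr => a _; congr (_ * (_ + _)).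
apply: eq_bigr => x _; congr (_ * _); apply: IHn => i.
by rewrite /upd; case: (i == j); rewrite ?size_rcons hb_size.
Qed.

Section CoinInstance.
Variable R : realType.

Definition coin_env : env R :=
  fun a => if a == ord0 then [:: (1, 2^-1); (0, 2^-1)] else [:: (0, 1)].

Definition base_opt : base R := fun _ a => (a == ord0)%:R.

Definition base_explore : base R :=
  fun h a => if a == ord0 then 1 - rate R (size h) else rate R (size h).

Lemma coin_env_valid : env_valid coin_env.
Proof.
move=> a; rewrite /coin_env; case: (a == ord0); split.
- by move=> x; rewrite !inE => /orP[] /eqP -> /=; lra.
- by rewrite !big_cons big_nil /=; lra.
- by move=> x; rewrite inE => /eqP -> /=.
- by rewrite big_cons big_nil addr0.
Qed.

Lemma base_opt_valid : base_valid base_opt.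
Proof. by move=> h; rewrite sum_ord2 /base_opt /= addr0; split=> // a. Qed.

Lemma base_explore_valid : base_valid base_explore.
Proof.
move=> h; rewrite sum_ord2 /base_explore /=; split; last by rewrite subrK.
have := rate_gt0 R (size h); have := rate_le_half R (size h).
by move=> ? ? a; case: ifP => _; lra.
Qed.

Lemma mean_coin_env a : mean coin_env a = (a == ord0)%:R / 2.
Proof.
rewrite /mean /coin_env; case: (a == ord0); rewrite !big_cons big_nil /=; lra.
Qed.

Lemma opt_coin_env : opt coin_env = 2^-1.
Proof. by rewrite /opt !mean_coin_env /= mul0r max_l ?mul1r. Qed.

Lemma base_opt_optimal h a : 0 < base_opt h a -> mean coin_env a = opt coin_env.
Proof.
by rewrite /base_opt opt_coin_env mean_coin_env; case: (a == ord0); rewrite ?ltxx ?mul1r.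
Qed.

Definition explore_prob (b : bool) (j : 'I_2) (hb : 'I_2 -> seq (arm * R)) : R :=
  if (j == ord0) != b then 0 else rate R (size (hb j)).

Lemma orderedE b j hb a :
  ordered base_opt base_explore b j (hb j) a =
  if a == ord0 then 1 - explore_prob b j hb else explore_prob b j hb.
Proof.
rewrite /ordered /explore_prob; case: ifP => _ //.
by rewrite /base_opt; case: (a == ord0); rewrite ?subr0.
Qed.

Lemma ordered_size b j (h h' : seq (arm * R)) :
  size h = size h' ->
  ordered base_opt base_explore b j h = ordered base_opt base_explore b j h'.
Proof.
by move=> eq_size; rewrite /ordered; case: ifP => _ //; rewrite /base_explore eq_size.
Qed.

Definition rest_regret (M : master R) (b : bool) n hm hb : R :=
  n%:R / 2 - value coin_env M (ordered base_opt base_explore b) n hm hb.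

Lemma rest_regretS M b n hm hb : master_valid M ->
  rest_regret M b n.+1 hm hb = \sum_(j < 2) M hm j *
    (explore_prob b j hb / 2
     + (1 - explore_prob b j hb) / 2 *
         rest_regret M b n (rcons hm (j, 1)) (upd hb j (ord0, 1))
     + (1 + explore_prob b j hb) / 2 *
         rest_regret M b n (rcons hm (j, 0)) (upd hb j (ord0, 0))).
Proof.
move=> /(_ hm)[_ M1]; rewrite /rest_regret /=.
have -> : n.+1%:R / 2 = \sum_(j < 2) M hm j * (n.+1%:R / 2).
  by rewrite -mulr_suml M1 mul1r.
rewrite -sumrB; apply: eq_bigr => j _; rewrite -mulrBr; congr (_ * _).
(* The bases read only the length of their history. *)
have arm_irrelevant r :
    value coin_env M (ordered base_opt base_explore b) n (rcons hm (j, r))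
      (upd hb j (ord_max, r)) =
    value coin_env M (ordered base_opt base_explore b) n (rcons hm (j, r))
      (upd hb j (ord0, r)).
  apply: eq_value_size => [|i]; first exact: ordered_size.
  by rewrite /upd; case: (i == j); rewrite ?size_rcons.
rewrite sum_ord2 !orderedE !mean_coin_env /coin_env /=.
rewrite !big_cons !big_nil /= !arm_irrelevant -[n.+1]addn1 natrD.
by field.
Qed.

Lemma size_upd (hb : 'I_2 -> seq (arm * R)) j o i :
  size (upd hb j o i) = (size (hb i) + (i == j))%N.
Proof. by rewrite /upd; case: (i == j); rewrite ?size_rcons ?addn1 ?addn0. Qed.

Lemma rest_regret_ge M : master_valid M ->
  forall n hm hb (w0 w1 : R), 0 <= w0 -> 0 <= w1 ->
  cost R n (size (hb ord0) + size (hb ord_max)) *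
    potential w0 w1 (size (hb ord0)) (size (hb ord_max))
  <= w0 * rest_regret M false n hm hb + w1 * rest_regret M true n hm hb.
Proof.
move=> M_valid; elim=> [|n IHn] hm hb w0 w1 w0_ge0 w1_ge0.
  by rewrite /cost big_ord0 /rest_regret /= !(mulr0, mul0r, subrr, addr0).
rewrite !rest_regretS // !sum_ord2 /explore_prob /= costS.
set N0 := size (hb ord0); set N1 := size (hb ord_max).
set K := cost R n (N0 + N1).+1.
have K_ge0 : 0 <= K by apply: cost_ge0.
have [p0_gt0 p0_le] := (rate_gt0 R N0, rate_le_half R N0).
have [p1_gt0 p1_le] := (rate_gt0 R N1, rate_le_half R N1).
have half_ge0 (x : R) : 0 <= x -> 0 <= x / 2 by move=> x0; rewrite divr_ge0.
have IH0 r c : 0 <= c -> K * potential (w0 / 2) (w1 * c / 2) N0.+1 N1 <=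
    w0 / 2 * rest_regret M false n (rcons hm (ord0, r)) (upd hb ord0 (ord0, r)) +
    w1 * c / 2 * rest_regret M true n (rcons hm (ord0, r)) (upd hb ord0 (ord0, r)).
  move=> c0; have := IHn _ (upd hb ord0 (ord0, r)) _ _
    (half_ge0 _ w0_ge0) (half_ge0 _ (mulr_ge0 w1_ge0 c0)).
  by rewrite !size_upd /= addn1 addn0 addSn.
have IH1 r c : 0 <= c -> K * potential (w1 / 2) (w0 * c / 2) N1.+1 N0 <=
    w1 / 2 * rest_regret M true n (rcons hm (ord_max, r)) (upd hb ord_max (ord0, r)) +
    w0 * c / 2 * rest_regret M false n (rcons hm (ord_max, r)) (upd hb ord_max (ord0, r)).
  move=> c0; have := IHn _ (upd hb ord_max (ord0, r)) _ _
    (half_ge0 _ (mulr_ge0 w0_ge0 c0)) (half_ge0 _ w1_ge0).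
  by rewrite !size_upd /= addn1 addn0 addnS potentialC addrC.
have branch0 := potential_branch w0_ge0 w1_ge0 K_ge0
  (IH0 1 (1 - rate R N0) ltac:(lra)) (IH0 0 (1 + rate R N0) ltac:(lra)).
have branch1 := potential_branch w1_ge0 w0_ge0 K_ge0
  (IH1 1 (1 - rate R N1) ltac:(lra)) (IH1 0 (1 + rate R N1) ltac:(lra)).
rewrite potentialC addnC in branch1.
have [M_ge0 M_sum] := M_valid hm; rewrite sum_ord2 in M_sum.
have := ler_wconvex2 (M_ge0 ord0) (M_ge0 ord_max) M_sum branch0 branch1.
lra.
Qed.

Lemma regret_coin_env M T :
  regret coin_env M base_opt base_explore T =
  2^-1 * rest_regret M false T [::] (fun _ => [::]) +
  2^-1 * rest_regret M true T [::] (fun _ => [::]).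
Proof. by rewrite /regret /exp_reward /rest_regret opt_coin_env; field. Qed.

End CoinInstance.

Theorem mainTheorem2 (R : realType) :
  exists (D : env R) (B1 B2 : base R),
    env_valid D /\ base_valid B1 /\ base_valid B2 /\
    (forall h a, 0 < B1 h a -> mean D a = opt D) /\
    exists c : R, 0 < c /\ exists T0 : nat,
      forall M : master R, master_valid M ->
      forall T : nat, (T0 <= T)%N ->
        c * Num.sqrt (T%:R) / ln (T%:R) <= regret D M B1 B2 T.
Proof.
exists (coin_env R), (@base_opt R), (@base_explore R).
split; first exact: coin_env_valid.
split; first exact: base_opt_valid.
split; first exact: base_explore_valid.
split; first exact: base_opt_optimal.
exists 256^-1; split => //; exists 3%N => M M_valid T T3.
have half_ge0 : 0 <= 2^-1 :> R by [].
have := rest_regret_ge M_valid T [::] (fun _ => [::]) half_ge0 half_ge0.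
rewrite /= -regret_coin_env; apply: le_trans.
apply: le_trans (sqrt_div_ln_le_rate R T3) _.
rewrite add0n; apply: le_trans (ler_pM _ _ (cost_ge R T) (potential_init R)).
- lra.
- by rewrite divr_ge0 // mulr_ge0 // ltW // rate_gt0.
- by [].
Qed.
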